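(* Let $K$ be the $2$-uniform tiling of the plane whose vertex types are $[3^6]$ and $[3^2,6^2]$. If $X$ is a map on the torus that is a quotient $X=K/\Gamma$ of $K$, then the vertices of $X$ form at most $4$ orbits under ${\rm Aut}(X)$.
   Context: A map is a polyhedral map: a cellular embedding of a connected graph in a closed surface such that the intersection of any two distinct faces is empty, a single vertex, or a single edge. For a vertex $u$, the faces containing $u$ form a cyclic sequence (the face-cycle at $u$); if this cyclic sequence consists of consecutive blocks of $n_1$ $p_1$-gons, then $n_2$ $p_2$-gons, ..., then $n_k$ $p_k$-gons, with cyclically consecutive $p_i$ distinct, then $u$ is said to have type $[p_1^{n_1},\dots,p_k^{n_k}]$ (defined up to cyclic shift and reversal). A $2$-uniform tiling is an edge-to-edge tiling of the Euclidean plane $\mathbb{R}^2$ by regular polygons whose symmetry group has exactly two orbits on the set of vertices; viewed as a map on the plane, its vertices have (at most) two types, listed as $[W;Z]$. (Up to isomorphism there are exactly $20$ such tilings; there is exactly one with the vertex types named in the claim.) For a map $K$ on the plane, a quotient of $K$ on the torus is a map $X$ on the torus together with a polyhedral covering map $\eta:K\to X$ with $X=K/\Gamma$, where $\Gamma\le {\rm Aut}(K)$ is a subgroup acting without fixed vertices, edges or faces and $K/\Gamma$ is homeomorphic to the torus. ${\rm Aut}(X)$ denotes the automorphism group of the map $X$, acting on its vertex set $V(X)$. *)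

From Stdlib Require Import ZArith List.
Import ListNotations.
Open Scope Z_scope.

(** Points of the triangular lattice: (a,b) stands for a*e1 + b*e2 with
    e1 = (1,0), e2 = (1/2, sqrt 3 / 2).  The six neighbours of p are
    p +/- e1, p +/- e2, p +/- (e1 - e2). *)
Definition pt := (Z * Z)%type.
Definition padd (p q : pt) : pt := (fst p + fst q, snd p + snd q).

(** The 2-uniform tiling K = [3^6; 3^2.6^2]: the triangular lattice with the
    points congruent to (1,1) or (2,2) mod 3 deleted; each deleted point
    leaves a hexagonal face.  Points = 0 mod 3 have type [3^6], the others
    type [3^2,6^2]. *)
Definition removed (p : pt) : Prop :=
  (fst p mod 3 = 1 /\ snd p mod 3 = 1) \/ (fst p mod 3 = 2 /\ snd p mod 3 = 2).
Definition Kvert (p : pt) : Prop := ~ removed p.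

Definition up_tri (p : pt) : list pt := [p; padd p (1,0); padd p (0,1)].
Definition down_tri (p : pt) : list pt :=
  [padd p (1,0); padd p (1,1); padd p (0,1)].
Definition hexagon (c : pt) : list pt :=
  [padd c (1,0); padd c (0,1); padd c (-1,1); padd c (-1,0);
   padd c (0,-1); padd c (1,-1)].
Definition Kface (F : list pt) : Prop :=
  exists p, ((F = up_tri p \/ F = down_tri p) /\ Forall Kvert F)
            \/ (F = hexagon p /\ removed p).

Definition KTransAut (w : pt) : Prop :=
  (forall p, Kvert p <-> Kvert (padd p w)) /\
  (forall F, Kface F <-> Kface (map (fun p => padd p w) F)).

(** The group Gamma generated by the translations by w1, w2; congruence of
    points modulo Gamma (vertices of X = K/Gamma are the classes). *)
Definition lat (w1 w2 : pt) (m n : Z) : pt :=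
  (m * fst w1 + n * fst w2, m * snd w1 + n * snd w2).
Definition cong (w1 w2 : pt) (p q : pt) : Prop :=
  exists m n, q = padd p (lat w1 w2 m n).

Definition Xsame (w1 w2 : pt) (F1 F2 : list pt) : Prop :=
  exists m n, F2 = map (fun p => padd p (lat w1 w2 m n)) F1.

Definition fedge (F : list pt) (i : nat) : pt * pt :=
  (nth i F (0,0), nth (Nat.modulo (S i) (length F)) F (0,0)).

Definition Xsame_edge (w1 w2 : pt) (e1 e2 : pt * pt) : Prop :=
  exists m n, (e2 = (padd (fst e1) (lat w1 w2 m n), padd (snd e1) (lat w1 w2 m n)))
           \/ (e2 = (padd (snd e1) (lat w1 w2 m n), padd (fst e1) (lat w1 w2 m n))).

(** x (a vertex of K, standing for its class) is a common vertex of the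
    images in X of the faces F1, F2. *)
Definition Xcommon (w1 w2 : pt) (F1 F2 : list pt) (x : pt) : Prop :=
  (exists p, In p F1 /\ cong w1 w2 p x) /\ (exists q, In q F2 /\ cong w1 w2 q x).

Definition Xpolyhedral (w1 w2 : pt) : Prop :=
  (forall F, Kface F -> forall i j, (i < j < length F)%nat ->
     ~ cong w1 w2 (nth i F (0,0)) (nth j F (0,0))) /\
  (forall F1 F2, Kface F1 -> Kface F2 -> ~ Xsame w1 w2 F1 F2 ->
     (forall x, ~ Xcommon w1 w2 F1 F2 x)
     \/ (exists v, forall x, Xcommon w1 w2 F1 F2 x <-> cong w1 w2 v x)
     \/ (exists i j, (i < length F1)%nat /\ (j < length F2)%nat /\
           Xsame_edge w1 w2 (fedge F1 i) (fedge F2 j) /\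
           forall x, Xcommon w1 w2 F1 F2 x <->
             (cong w1 w2 (fst (fedge F1 i)) x \/ cong w1 w2 (snd (fedge F1 i)) x))).

(** f (on representatives) induces a map V(X) -> V(X) sending faces of X to
    faces of X. *)
Definition Xhom (w1 w2 : pt) (f : pt -> pt) : Prop :=
  (forall p, Kvert p -> Kvert (f p)) /\
  (forall p q, Kvert p -> Kvert q -> cong w1 w2 p q -> cong w1 w2 (f p) (f q)) /\
  (forall F, Kface F -> exists F', Kface F' /\
     forall x, (exists p, In p F /\ cong w1 w2 (f p) x) <->
               (exists q, In q F' /\ cong w1 w2 q x)).

Definition Xaut (w1 w2 : pt) (f : pt -> pt) : Prop :=
  Xhom w1 w2 f /\
  exists g, Xhom w1 w2 g /\
    forall p, Kvert p -> cong w1 w2 (g (f p)) p /\ cong w1 w2 (f (g p)) p.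

(** The maps [x |-> s x + t] with [s = 1] or [-1] and [t] in [(3Z)^2] are
    symmetries of [K]: they preserve the residues mod 3 of deleted points
    ((1,1) and (2,2) are swapped by negation).  They commute with translations
    up to a sign, so they descend to automorphisms of every quotient
    [X = K/Gamma] by a translation group.  Already under this group the
    vertices of [K] fall into four orbits: the points [= 0 mod 3], and the
    three pairs [{r, -r}] of the remaining six residues mod 3. *)
From Stdlib Require Import ZArith List Lia.
Import ListNotations.
Open Scope Z_scope.

Ltac mod_lia := Z.to_euclidean_division_equations; lia.

Definition aff (s : Z) (t : pt) (x : pt) : pt :=
  (s * fst x + fst t, s * snd x + snd t).

Definition admissible (s : Z) (t : pt) : Prop :=
  (s = 1 \/ s = -1) /\ fst t mod 3 = 0 /\ snd t mod 3 = 0.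

Definition same_vertices (F G : list pt) : Prop := forall y, In y F <-> In y G.

Lemma pair_eqE (a b c d : Z) : ((a, b) = (c, d) :> pt) <-> a = c /\ b = d.
Proof. split; [intros H; inversion H; auto | intros [-> ->]; reflexivity]. Qed.

Lemma cong_refl w1 w2 p : cong w1 w2 p p.
Proof. exists 0, 0; destruct p; unfold padd, lat; simpl; f_equal; ring. Qed.

Lemma cong_aff w1 w2 s t p q :
  cong w1 w2 p q -> cong w1 w2 (aff s t p) (aff s t q).
Proof. intros [m [n ->]]; exists (s * m), (s * n); unfold aff, padd, lat; simpl; f_equal; ring. Qed.

Definition aff_inv (s : Z) (t : pt) : pt := (- (s * fst t), - (s * snd t)).

Lemma aff_invK s t p : (s = 1 \/ s = -1) ->
  aff s (aff_inv s t) (aff s t p) = p /\ aff s t (aff s (aff_inv s t) p) = p.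
Proof. intros Hs; destruct p; unfold aff, aff_inv; simpl; rewrite !pair_eqE; destruct Hs; subst; lia. Qed.

Section Admissible.

Variables (s : Z) (t : pt).
Hypothesis Hst : admissible s t.

Lemma admissible_inv : admissible s (aff_inv s t).
Proof. destruct Hst as [Hs [H1 H2]]; split; [exact Hs | simpl; destruct Hs; subst; mod_lia]. Qed.

Lemma removed_aff p : removed (aff s t p) <-> removed p.
Proof.
  destruct Hst as [Hs [H1 H2]], p, t; unfold removed, aff; simpl in *.
  destruct Hs; subst; split; intro; mod_lia.
Qed.

Lemma Kvert_aff p : Kvert p -> Kvert (aff s t p).
Proof. intros Hp Hr; apply Hp, removed_aff, Hr. Qed.

Ltac same_vertices_lia :=
  intros [y1 y2]; cbn [negb]; unfold up_tri, down_tri, hexagon, aff, padd;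
  cbn [map fst snd In]; rewrite ?pair_eqE; split; intro; lia.

(* Negation exchanges upward and downward triangles. *)
Lemma triangle_aff (up : bool) p : exists (up' : bool) q,
  same_vertices (map (aff s t) ((if up then up_tri else down_tri) p))
                ((if up' then up_tri else down_tri) q).
Proof.
  destruct Hst as [[-> | ->] _], p as [p1 p2], t as [t1 t2].
  - exists up, (p1 + t1, p2 + t2); destruct up; same_vertices_lia.
  - exists (negb up), (- p1 + t1 - 1, - p2 + t2 - 1); destruct up; same_vertices_lia.
Qed.

Lemma hexagon_aff c : same_vertices (map (aff s t) (hexagon c)) (hexagon (aff s t c)).
Proof. destruct Hst as [[-> | ->] _], c, t; same_vertices_lia. Qed.

Lemma triangle_face_aff (up : bool) p :
  Forall Kvert ((if up then up_tri else down_tri) p) ->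
  exists F', Kface F' /\
    same_vertices (map (aff s t) ((if up then up_tri else down_tri) p)) F'.
Proof.
  intros HK; destruct (triangle_aff up p) as [up' [q Hq]].
  exists ((if up' then up_tri else down_tri) q); split; [| exact Hq].
  exists q; left; split; [destruct up'; auto |].
  apply Forall_forall; intros y Hy; apply Hq, in_map_iff in Hy.
  destruct Hy as [x [<- Hx]]; apply Kvert_aff; rewrite Forall_forall in HK; auto.
Qed.

Lemma Kface_aff F : Kface F ->
  exists F', Kface F' /\ same_vertices (map (aff s t) F) F'.
Proof.
  intros [p [[[-> | ->] HK] | [-> Hr]]].
  - exact (triangle_face_aff true p HK).
  - exact (triangle_face_aff false p HK).
  - exists (hexagon (aff s t p)); split; [| apply hexagon_aff].
    exists (aff s t p); right; split; [reflexivity | apply removed_aff, Hr].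
Qed.

Lemma Xhom_aff w1 w2 : Xhom w1 w2 (aff s t).
Proof.
  split; [exact Kvert_aff |]; split; [intros p q _ _; apply cong_aff |].
  intros F HF; destruct (Kface_aff F HF) as [F' [HF' Hsame]].
  exists F'; split; [exact HF' |]; intros x; split.
  - intros [p [Hp Hc]]; exists (aff s t p); split; [apply Hsame, in_map, Hp | exact Hc].
  - intros [q [Hq Hc]]; apply Hsame, in_map_iff in Hq; destruct Hq as [p [<- Hp]].
    exists p; auto.
Qed.

End Admissible.

Lemma Xaut_aff w1 w2 s t : admissible s t -> Xaut w1 w2 (aff s t).
Proof.
  intros Hst; split; [apply Xhom_aff, Hst |].
  exists (aff s (aff_inv s t)); split; [apply Xhom_aff, admissible_inv, Hst |].
  intros p _; destruct (aff_invK s t p) as [-> ->]; [apply Hst | split; apply cong_refl].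
Qed.

Definition orbit_reps : list pt := [(0, 0); (1, 0); (0, 1); (1, 2)].

Lemma Kvert_orbit_reps : Forall Kvert orbit_reps.
Proof. repeat constructor; unfold Kvert, removed; simpl; mod_lia. Qed.

Lemma residue_rep p : Kvert p -> exists s r, (s = 1 \/ s = -1) /\ In r orbit_reps /\
  (fst r - s * fst p) mod 3 = 0 /\ (snd r - s * snd p) mod 3 = 0.
Proof.
  destruct p as [p1 p2]; unfold Kvert, removed; simpl; intros Hp.
  assert (p1 mod 3 = 0 /\ p2 mod 3 = 0 \/ p1 mod 3 = 1 /\ p2 mod 3 = 0
       \/ p1 mod 3 = 2 /\ p2 mod 3 = 0 \/ p1 mod 3 = 0 /\ p2 mod 3 = 1
       \/ p1 mod 3 = 0 /\ p2 mod 3 = 2 \/ p1 mod 3 = 1 /\ p2 mod 3 = 2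
       \/ p1 mod 3 = 2 /\ p2 mod 3 = 1) as C by mod_lia.
  destruct C as [C | [C | [C | [C | [C | [C | C]]]]]];
    [ exists 1, (0, 0) | exists 1, (1, 0) | exists (-1), (1, 0) | exists 1, (0, 1)
    | exists (-1), (0, 1) | exists 1, (1, 2) | exists (-1), (1, 2) ];
    cbn [fst snd In]; repeat split; auto 6; mod_lia.
Qed.

Lemma Kvert_aff_orbit_rep p : Kvert p ->
  exists s t, admissible s t /\ In (aff s t p) orbit_reps.
Proof.
  intros Hp; destruct (residue_rep p Hp) as [s [r [Hs [Hr [H1 H2]]]]].
  exists s, (fst r - s * fst p, snd r - s * snd p); split; [split; auto |].
  replace (aff _ _ p) with r; [exact Hr |].
  destruct r, p; unfold aff; simpl; f_equal; ring.
Qed.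

Theorem theorem1 (w1 w2 : pt)
  (Hdet : fst w1 * snd w2 - snd w1 * fst w2 <> 0)
  (H1 : KTransAut w1) (H2 : KTransAut w2)
  (Hpoly : Xpolyhedral w1 w2) :
  exists rs : list pt, (length rs <= 4)%nat /\ Forall Kvert rs /\
    forall p, Kvert p ->
      exists f, Xaut w1 w2 f /\ exists r, In r rs /\ cong w1 w2 (f p) r.
Proof.
  exists orbit_reps; split; [simpl; lia |]; split; [exact Kvert_orbit_reps |].
  intros p Hp; destruct (Kvert_aff_orbit_rep p Hp) as [s [t [Hst Hin]]].
  exists (aff s t); split; [apply Xaut_aff, Hst |].
  exists (aff s t p); split; [exact Hin | apply cong_refl].
Qed.
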